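(* Let $\mathbf d=\{d_i\}_{i\in\mathbb N}$ and $\boldsymbol\lambda=\{\lambda_i\}_{i\in\mathbb N}$ be nondecreasing real sequences such that \[ \delta_k:=\sum_{i=1}^k(d_i-\lambda_i)\ge0\ \text{ for all }k\in\mathbb N\qquad\text{and}\qquad\liminf_{k\to\infty}\delta_k=0 . \] Let $E$ be a symmetric operator on a dense domain $\mathcal D$ of a Hilbert space $\mathcal H$. Suppose that (i) there exists $N\in\mathbb N$ such that $\delta_N\le\delta_k$ for all $k\le N$, and (ii) there is an orthonormal sequence $\{g_i\}_{i\in\mathbb N}\subset\mathcal D$ with $\langle Eg_i,g_i\rangle=\tilde d_i$ for all $i$, where \[ \tilde d_i=\begin{cases}\lambda_1+\delta_N,& i=1,\\ \lambda_i,& i=2,\dots,N,\\ d_i,& i>N.\end{cases} \] Then there exists an orthonormal sequence $\{e_i\}_{i\in\mathbb N}$, each element of which lies in the (algebraic) linear span of $\{g_i\}_{i\in\mathbb N}$, such that $\overline{\operatorname{span}}\{e_i\}=\overline{\operatorname{span}}\{g_i\}$ and $\langle Ee_i,e_i\rangle=d_i$ for all $i\in\mathbb N$.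
   Context: $E$ symmetric means $\langle Ef,g\rangle=\langle f,Eg\rangle$ for all $f,g\in\mathcal D$. $\overline{\operatorname{span}}$ is the closed linear span. *)

From HB Require Import structures.
From mathcomp Require Import all_boot all_order all_algebra.
From mathcomp Require Import all_classical all_reals all_analysis.
From mathcomp.real_closed Require Import complex.
Set Implicit Arguments. Unset Strict Implicit. Unset Printing Implicit Defensive.
Import Order.TTheory GRing.Theory Num.Theory.
Local Open Scope ring_scope.
Local Open Scope classical_set_scope.

Definition cR (R : realType) (x : R) : R[i] := Complex x 0.

Definition inner_product_space (R : realType) (V : lmodType R[i])
  (ip : V -> V -> R[i]) : Prop :=
  [/\ (forall (a : R[i]) (x y z : V), ip (a *: x + y) z = a * ip x z + ip y z),
      (forall x y : V, ip y x = (ip x y)^*),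
      (forall x : V, 0 <= ip x x) &
      (forall x : V, ip x x = 0 -> x = 0)].

Definition hnorm (R : realType) (V : lmodType R[i]) (ip : V -> V -> R[i])
  (x : V) : R := Num.sqrt (complex.Re (ip x x)).

Definition hilbert_space (R : realType) (V : lmodType R[i])
  (ip : V -> V -> R[i]) : Prop :=
  inner_product_space ip /\
  forall u : nat -> V,
    (forall eps : R, 0 < eps -> exists M : nat, forall m n : nat,
        (M <= m)%N -> (M <= n)%N -> hnorm ip (u m - u n) < eps) ->
    exists l : V, forall eps : R, 0 < eps -> exists M : nat, forall n : nat,
        (M <= n)%N -> hnorm ip (u n - l) < eps.

Definition linear_subspace (R : realType) (V : lmodType R[i]) (D : set V) :=
  D 0 /\ forall (a : R[i]) (x y : V), D x -> D y -> D (a *: x + y).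

Definition dense_in (R : realType) (V : lmodType R[i]) (ip : V -> V -> R[i])
  (D : set V) :=
  forall (v : V) (eps : R), 0 < eps -> exists w, D w /\ hnorm ip (v - w) < eps.

(* E is a (linear) operator with domain D: only its values on D matter *)
Definition operator_on (R : realType) (V : lmodType R[i]) (D : set V)
  (E : V -> V) :=
  linear_subspace D /\
  forall (a : R[i]) (x y : V), D x -> D y -> E (a *: x + y) = a *: E x + E y.

Definition symmetric_on (R : realType) (V : lmodType R[i]) (ip : V -> V -> R[i])
  (D : set V) (E : V -> V) :=
  forall f g : V, D f -> D g -> ip (E f) g = ip f (E g).

Definition orthonormal_seq (R : realType) (V : lmodType R[i]) (ip : V -> V -> R[i])
  (g : nat -> V) :=
  forall i j : nat, ip (g i) (g j) = (i == j)%:R.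

Definition lspan (R : realType) (V : lmodType R[i]) (g : nat -> V) : set V :=
  [set v | exists (n : nat) (c : nat -> R[i]), v = \sum_(j < n) c j *: g j].

Definition clspan (R : realType) (V : lmodType R[i]) (ip : V -> V -> R[i])
  (g : nat -> V) : set V :=
  [set v | forall eps : R, 0 < eps ->
           exists w, lspan g w /\ hnorm ip (v - w) < eps].

(* Sequences are indexed from 0: d i here is d_{i+1} of the paper.
   delta d lam k = sum_{i=1}^k (d_i - lambda_i). *)
Definition delta (R : realType) (d lam : nat -> R) (k : nat) : R :=
  \sum_(i < k) (d i - lam i).

Definition dtilde (R : realType) (d lam : nat -> R) (N : nat) (i : nat) : R :=
  if i == 0%N then lam 0%N + delta d lam N
  else if (i < N)%N then lam i else d i.

(* Only the first N vectors have to move: for i >= N the target d_i is already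
   the diagonal entry of g_i.  On the first N vectors, the minimality of delta_N
   among delta_1, ..., delta_N says exactly that the prefix sums of tilde d lie
   below those of d, with equal total; as d is nondecreasing this is the
   Schur-Horn condition, and the finite Schur-Horn construction applies.  It
   works by induction: with current diagonal a and target b, take the first j
   with b_0 <= a_j.  If j = 0 then a_0 = b_0 and the first vector is kept;
   otherwise a rotation in the plane of the first and j-th vectors (after a
   phase change of the j-th one killing the real part of the off-diagonal
   entry) produces a vector with diagonal b_0 and one with diagonal
   a_0 + a_j - b_0, and the remaining vectors again satisfy the condition. *)

From HB Require Import structures.
From mathcomp Require Import all_boot all_order all_algebra.
From mathcomp Require Import all_classical all_reals all_analysis.
From mathcomp.real_closed Require Import complex.
From mathcomp Require Import ring lra zify.

Set Implicit Arguments.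
Unset Strict Implicit.
Unset Printing Implicit Defensive.

Import Order.TTheory GRing.Theory Num.Theory.
Local Open Scope ring_scope.
Local Open Scope classical_set_scope.

Section InnerProduct.
Variables (R : realType) (V : lmodType R[i]) (ip : V -> V -> R[i]).
Hypothesis ipV : inner_product_space ip.

Lemma ip0l z : ip 0 z = 0.
Proof.
have [ipDZ _ _ _] := ipV.
have := ipDZ 1 0 0 z; rewrite scale1r addr0 mul1r -{1}[ip 0 z]addr0.
by move=> /addrI <-.
Qed.

Lemma ipDl x y z : ip (x + y) z = ip x z + ip y z.
Proof. by have [ipDZ _ _ _] := ipV; rewrite -{1}[x]scale1r ipDZ mul1r. Qed.

Lemma ipZl a x z : ip (a *: x) z = a * ip x z.
Proof. by have [ipDZ _ _ _] := ipV; rewrite -[a *: x]addr0 ipDZ ip0l addr0. Qed.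

Lemma ipC x y : ip y x = (ip x y)^*.
Proof. by have [_ ipC _ _] := ipV. Qed.

Lemma ipDr x y z : ip x (y + z) = ip x y + ip x z.
Proof. by rewrite ipC ipDl rmorphD /= -!ipC. Qed.

Lemma ipZr a x y : ip x (a *: y) = a^* * ip x y.
Proof. by rewrite ipC ipZl rmorphM /= -ipC. Qed.

Lemma ip_comb2 a b a' b' x y x' y' :
  ip (a *: x + b *: y) (a' *: x' + b' *: y') =
  a * a'^* * ip x x' + a * b'^* * ip x y' + b * a'^* * ip y x' + b * b'^* * ip y y'.
Proof. by rewrite !ipDl !ipZl !ipDr !ipZr; ring. Qed.

Lemma ip_rotation u v co si z :
  ip u u = 1 -> ip v v = 1 -> ip u v = 0 -> co^* = co -> si^* = si ->
  co * co + si * si = 1 -> z * z^* = 1 ->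
  let w := co *: u + (si * z) *: v in let w' := (- si) *: u + (co * z) *: v in
  [/\ ip w w = 1, ip w' w' = 1 & ip w w' = 0].
Proof.
move=> uu vv uv coC siC cs1 zz w w'.
have vu : ip v u = 0 by rewrite ipC uv conjC0.
rewrite /w /w' !ip_comb2 uu uv vu vv !rmorphM /= rmorphN /= coC siC; split.
- transitivity (co * co + si * si + si * si * (z * z^* - 1)); first ring.
  by rewrite zz subrr mulr0 addr0 cs1.
- transitivity (co * co + si * si + co * co * (z * z^* - 1)); first ring.
  by rewrite zz subrr mulr0 addr0 cs1.
- transitivity (co * si * (z * z^* - 1)); first ring.
  by rewrite zz subrr mulr0.
Qed.

Lemma orthogonal_subspace w : linear_subspace [set x | ip x w = 0].
Proof.
split => [|a x y /= xw yw]; first exact: ip0l.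
by rewrite ipDl ipZl xw yw mulr0 addr0.
Qed.

End InnerProduct.

Lemma comb2_comb2 (K : pzRingType) (V : lmodType K) (x y p q p' q' : K) (u v : V) :
  x *: (p *: u + q *: v) + y *: (p' *: u + q' *: v) =
  (x * p + y * p') *: u + (x * q + y * q') *: v.
Proof. by rewrite !scalerDr !scalerA !scalerDl addrACA. Qed.

Lemma rotation_inverse (R : rcfType) (V : lmodType R[i]) (co si z : R[i]) (u v : V) :
  co * co + si * si = 1 -> z * z^* = 1 ->
  let w := co *: u + (si * z) *: v in let w' := (- si) *: u + (co * z) *: v in
  u = co *: w + (- si) *: w' /\ v = (z^* * si) *: w + (z^* * co) *: w'.
Proof.
move=> cs1 zz w w'; rewrite /w /w' !comb2_comb2 mulrNN cs1; split.
  by rewrite (_ : _ * (si * z) + _ = 0) ?scale1r ?scale0r ?addr0 //; ring.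
rewrite (_ : _ * co + _ * - si = 0); last by ring.
rewrite (_ : _ * (si * z) + _ * (co * z) = 1) ?scale0r ?add0r ?scale1r //.
by transitivity ((co * co + si * si) * (z * z^*)); [ring | rewrite cs1 zz mulr1].
Qed.

Section Spans.
Variables (R : realType) (V : lmodType R[i]).
Implicit Types (S : set V) (u v : nat -> V).

Lemma subspaceZ S a x : linear_subspace S -> S x -> S (a *: x).
Proof. by move=> [S0 SDZ] Sx; rewrite -[_ *: _]addr0; apply: SDZ. Qed.

Lemma subspace_comb2 S a b x y :
  linear_subspace S -> S x -> S y -> S (a *: x + b *: y).
Proof. by move=> SS Sx Sy; apply: SS.2 => //; apply: subspaceZ. Qed.

Lemma subspace_sum S n (c : nat -> R[i]) (f : nat -> V) :
  linear_subspace S -> (forall j, (j < n)%N -> S (f j)) ->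
  S (\sum_(j < n) c j *: f j).
Proof.
move=> SS; elim: n => [|n IH] Sf; first by rewrite big_ord0; case: SS.
rewrite big_ord_recr /= addrC; apply: SS.2; first exact: Sf.
by apply: IH => j jn; apply: Sf; apply: ltnW.
Qed.

Definition fspan u n : set V :=
  [set x | exists c : nat -> R[i], x = \sum_(j < n) c j *: u j].

Lemma fspan_subspace u n : linear_subspace (fspan u n).
Proof.
split; first by exists (fun=> 0); rewrite big1 // => j _; rewrite scale0r.
move=> a _ _ [c ->] [c' ->]; exists (fun j => a * c j + c' j).
rewrite scaler_sumr -big_split; apply: eq_bigr => j _.
by rewrite scalerA scalerDl.
Qed.

Lemma fspan_gen u n i : (i < n)%N -> fspan u n (u i).
Proof.
move=> ilt; exists (fun j => (j == i)%:R).
rewrite (bigD1 (Ordinal ilt)) //= eqxx scale1r big1 ?addr0 // => k.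
by rewrite -val_eqE /= => /negbTE ->; rewrite scale0r.
Qed.

Lemma fspan_min S u n :
  linear_subspace S -> (forall i, (i < n)%N -> S (u i)) -> fspan u n `<=` S.
Proof. by move=> SS Su _ [c ->]; exact: subspace_sum SS Su. Qed.

Lemma fspan_mono u m n : (m <= n)%N -> fspan u m `<=` fspan u n.
Proof.
move=> mn; apply: fspan_min (fspan_subspace u n) _ => i im.
exact/fspan_gen/(leq_trans im).
Qed.

Lemma fspan_shift u n : fspan (fun i => u i.+1) n `<=` fspan u n.+1.
Proof. by apply: fspan_min (fspan_subspace u n.+1) _ => i ilt; apply: fspan_gen. Qed.

Lemma eq_fspan u v n :
  (forall i, (i < n)%N -> fspan v n (u i)) ->
  (forall i, (i < n)%N -> fspan u n (v i)) -> fspan u n = fspan v n.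
Proof.
by move=> uv vu; apply/seteqP; split; apply: fspan_min; rewrite //; apply: fspan_subspace.
Qed.

Lemma fspan_sub_lspan u n : fspan u n `<=` lspan u.
Proof. by move=> _ [c ->]; exists n, c. Qed.

Lemma lspan_gen u i : lspan u (u i).
Proof. exact/fspan_sub_lspan/(fspan_gen u (ltnSn i)). Qed.

Lemma lspan_subspace u : linear_subspace (lspan u).
Proof.
split; first exact: (fspan_sub_lspan (fspan_subspace u 0).1).
move=> a x y [m ux] [n uy]; exists (m + n)%N.
apply: (fspan_subspace u (m + n)).2.
  exact: fspan_mono (leq_addr _ _) _ ux.
exact: fspan_mono (leq_addl _ _) _ uy.
Qed.

Lemma lspan_min S u :
  linear_subspace S -> (forall i, S (u i)) -> lspan u `<=` S.
Proof. by move=> SS Su _ [n [c ->]]; exact: subspace_sum SS (fun j _ => Su j). Qed.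

End Spans.

Lemma conj_cR (R : realType) (x : R) : (cR x)^* = cR x.
Proof. by apply: conj_Creal; rewrite /cR complex_real. Qed.

Lemma cRD (R : realType) (x y : R) : cR (x + y) = cR x + cR y.
Proof. exact: (rmorphD (real_complex R)). Qed.

Lemma cRM (R : realType) (x y : R) : cR (x * y) = cR x * cR y.
Proof. exact: (rmorphM (real_complex R)). Qed.

Lemma unimodular_phase (R : rcfType) (g : R[i]) :
  exists z : R[i], z * z^* = 1 /\ z^* * g + z * g^* = 0.
Proof.
have [->|g0] := eqVneq g 0.
  by exists 1; rewrite conjC1 conjC0 !mulr0 mulr1 addr0.
have ng0 : `|g| != 0 by rewrite normr_eq0.
exists ('i * g / `|g|); rewrite !rmorphM /= conjCi fmorphV /= conj_normC.
split; last by ring.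
have -> : 'i * g / `|g| * (- 'i * g^* / `|g|) = - 'i ^+ 2 * (g * g^*) / `|g| ^+ 2.
  by rewrite expr2 invfM; ring.
by rewrite sqrCi -normCK opprK mul1r divff // expf_neq0.
Qed.

Lemma convex_sqrt_weights (R : rcfType) (al be t : R) :
  al <= t <= be -> exists c s : R, c * c + s * s = 1 /\ c * c * al + s * s * be = t.
Proof.
case/andP=> alt tbe.
have [p [p0 p1 pt]] : exists p, [/\ 0 <= p, p <= 1 & p * al + (1 - p) * be = t].
  have [eab|nab] := eqVneq al be.
    by exists 1; rewrite mul1r subrr mul0r addr0; split => //; lra.
  have ab : 0 < be - al by rewrite subr_gt0 lt_neqAle nab (le_trans alt tbe).
  exists ((be - t) / (be - al)); split.
  - by apply: divr_ge0; lra.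
  - by rewrite ler_pdivrMr // mul1r; lra.
  - by field; rewrite lt0r_neq0.
exists (Num.sqrt p), (Num.sqrt (1 - p)).
by rewrite -!expr2 !sqr_sqrtr ?subr_ge0 // addrC subrK.
Qed.

Definition replace2 {T} (u : nat -> T) (p q : nat) (x y : T) (k : nat) : T :=
  if k == p then x else if k == q then y else u k.

Section Orthonormal.
Variables (R : realType) (V : lmodType R[i]) (ip : V -> V -> R[i]).
Hypothesis ipV : inner_product_space ip.

Definition orthonormal_on n (u : nat -> V) :=
  forall i j, (i < n)%N -> (j < n)%N -> ip (u i) (u j) = (i == j)%:R.

Section Replace2.
Variables (n p q : nat) (u : nat -> V) (w w' : V).
Hypotheses (pn : (p < n)%N) (qn : (q < n)%N) (pq : p != q).

Let v := replace2 u p q w w'.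

Let vp : v p = w.
Proof. by rewrite /v /replace2 eqxx. Qed.

Let vq : v q = w'.
Proof. by rewrite /v /replace2 eq_sym (negbTE pq) eqxx. Qed.

Lemma orthonormal_on_replace2 :
  orthonormal_on n u ->
  (forall S, linear_subspace S -> S (u p) -> S (u q) -> S w /\ S w') ->
  [/\ ip w w = 1, ip w' w' = 1 & ip w w' = 0] ->
  orthonormal_on n v.
Proof.
move=> onu span [ww w'w' ww'].
have w'w : ip w' w = 0 by rewrite (ipC ipV) ww' conjC0.
have perp k : (k < n)%N -> k != p -> k != q -> ip w (u k) = 0 /\ ip w' (u k) = 0.
  move=> kn kp kq; apply: (span [set x | ip x (u k) = 0]); first exact: orthogonal_subspace.
    by rewrite /= onu // eq_sym (negbTE kp).
  by rewrite /= onu // eq_sym (negbTE kq).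
have perp' k : (k < n)%N -> k != p -> k != q -> ip (u k) w = 0 /\ ip (u k) w' = 0.
  move=> kn kp kq; rewrite !(ipC ipV _ (u k)).
  by have [-> ->] := perp k kn kp kq; rewrite conjC0.
move=> k l kn ln; rewrite /v /replace2.
case: (k =P p) => [->|/eqP kp]; case: (l =P p) => [->|/eqP lp]; rewrite ?eqxx //.
- case: (l =P q) => [->|/eqP lq]; first by rewrite (negbTE pq).
  by rewrite (perp l ln lp lq).1 eq_sym (negbTE lp).
- case: (k =P q) => [->|/eqP kq]; first by rewrite eq_sym (negbTE pq).
  by rewrite (perp' k kn kp kq).1 (negbTE kp).
- case: (k =P q) => [->|/eqP kq]; case: (l =P q) => [->|/eqP lq]; rewrite ?eqxx //.
  + by rewrite (perp l ln lp lq).2 eq_sym (negbTE lq).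
  + by rewrite (perp' k kn kp kq).2 (negbTE kq).
  + exact: onu.
Qed.

Lemma fspan_replace2 :
  (forall S, linear_subspace S -> S (u p) -> S (u q) -> S w /\ S w') ->
  (forall S, linear_subspace S -> S w -> S w' -> S (u p) /\ S (u q)) ->
  fspan v n = fspan u n.
Proof.
move=> fwd bwd.
have [wu w'u] := fwd _ (fspan_subspace u n) (fspan_gen u pn) (fspan_gen u qn).
have [upv uqv] : fspan v n (u p) /\ fspan v n (u q).
  apply: (bwd (fspan v n)); first exact: fspan_subspace.
    by rewrite -vp; exact: fspan_gen.
  by rewrite -vq; exact: fspan_gen.
apply: eq_fspan => k kn.
- by rewrite /v /replace2; case: ifP => _ //; case: ifP => _ //; exact: fspan_gen.
- have [->|kp] := eqVneq k p => //; have [->|kq] := eqVneq k q => //.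
  have -> : u k = v k by rewrite /v /replace2 (negbTE kp) (negbTE kq).
  exact: fspan_gen.
Qed.

End Replace2.

End Orthonormal.

Section PrefixDominated.
Variable R : realDomainType.
Implicit Types a b : nat -> R.

(* For nondecreasing [b] this is the Schur-Horn condition: [b] is majorized by [a]. *)
Definition prefix_dominated n a b :=
  (forall k, (k <= n)%N -> \sum_(i < k) a i <= \sum_(i < k) b i) /\
  \sum_(i < n) a i = \sum_(i < n) b i.

(* What is left of the diagonal [a] once the pair (a 0, a j) has been turned into
   (b 0, a 0 + a j - b 0) and b 0 split off. *)
Definition pivoted a b j i := a i.+1 + (if i.+1 == j then a 0%N - b 0%N else 0).

Lemma prefix_dominated_pivot n a b :
  nondecreasing_seq b -> prefix_dominated n.+1 a b ->
  exists2 j, (j <= n)%N & b 0%N <= a j /\ forall i, (i < j)%N -> a i < b 0%N.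
Proof.
move=> ndb [_ tot].
have ex : exists j, (j <= n)%N && (b 0%N <= a j).
  apply/not_existsP => none; move: tot; apply/eqP; rewrite lt_eqF //.
  apply: ltr_sum => [|i _]; first by apply/hasP; exists ord0; rewrite ?mem_index_enum.
  have /negP := none i; rewrite -ltnS ltn_ord /= -ltNge => /lt_le_trans; apply.
  exact: ndb.
case: (ex_minnP ex) => k /andP[kn bak] kmin.
exists k => //; split => // i ik; rewrite ltNge; apply/negP => bai.
by have := kmin i; rewrite bai andbT (leq_trans (ltnW ik) kn) leqNgt ik => /(_ isT).
Qed.

Lemma prefix_dominated_pivoted n a b j :
  nondecreasing_seq b -> prefix_dominated n.+1 a b -> (j <= n)%N ->
  b 0%N <= a j -> (forall i, (i < j)%N -> a i <= b 0%N) ->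
  prefix_dominated n (pivoted a b j) (fun i => b i.+1).
Proof.
move=> ndb [dom tot] jn baj ab.
have a0b0 : a 0%N <= b 0%N by have := dom 1%N isT; rewrite !big_ord1.
have sum_pivoted k : \sum_(i < k) pivoted a b j i =
    \sum_(i < k) a i.+1 + (if (0 < j <= k)%N then a 0%N - b 0%N else 0).
  elim: k => [|k IH]; first by rewrite !big_ord0 (_ : (0 < j <= 0)%N = false) ?addr0 //; lia.
  rewrite !big_ord_recr /= IH /pivoted; have [<-|kj] := eqVneq k.+1 j.
    by rewrite ltnn andbF leqnn /=; ring.
  have -> : (0 < j <= k.+1)%N = (0 < j <= k)%N by lia.
  by rewrite addr0 addrAC.
have sum_past k : (j <= k)%N -> \sum_(i < k) pivoted a b j i = \sum_(i < k.+1) a i - b 0%N.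
  move=> jk; rewrite sum_pivoted big_ord_recl; have [j0|jpos] := posnP j.
    have a0 : a 0%N = b 0%N by apply/le_anti; rewrite a0b0; move: baj; rewrite j0.
    by rewrite a0 /=; ring.
  by rewrite jk /=; ring.
split=> [k kn|]; last by rewrite sum_past // tot big_ord_recl; ring.
have [jk|kj] := leqP j k.
  by rewrite sum_past // lerBlDl; move: (dom k.+1 kn); rewrite [X in _ <= X]big_ord_recl.
rewrite sum_pivoted (_ : (0 < j <= k)%N = false) ?addr0; last by lia.
apply: ler_sum => i _; apply: le_trans (ab _ _) (ndb _ _ _) => //.
exact: leq_ltn_trans (ltn_ord i) kj.
Qed.

End PrefixDominated.

Definition prepend {T} (x : T) (f : nat -> T) (k : nat) : T :=
  if k is k'.+1 then f k' else x.

Section Operator.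
Variables (R : realType) (V : lmodType R[i]) (ip : V -> V -> R[i]).
Hypothesis ipV : inner_product_space ip.
Variables (D : set V) (E : V -> V).
Hypotheses (opE : operator_on D E) (symE : symmetric_on ip D E).

Definition has_diagonal n (u : nat -> V) (a : nat -> R) :=
  forall i, (i < n)%N -> ip (E (u i)) (u i) = cR (a i).

Lemma operator_comb2 a b x y : D x -> D y -> E (a *: x + b *: y) = a *: E x + b *: E y.
Proof.
have [[D0 _] EDZ] := opE => Dx Dy.
have E0 : E 0 = 0.
  by have := EDZ 1 0 0 D0 D0; rewrite !scale1r addr0 -{1}[E 0]addr0 => /addrI <-.
have EZ c z : D z -> E (c *: z) = c *: E z.
  by move=> Dz; rewrite -[c *: z]addr0 EDZ // E0 addr0.
by rewrite EDZ ?EZ //; exact: subspaceZ opE.1 Dy.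
Qed.

Lemma rotate_pair u v (al be t : R) :
  D u -> D v -> ip u u = 1 -> ip v v = 1 -> ip u v = 0 ->
  ip (E u) u = cR al -> ip (E v) v = cR be -> al <= t <= be ->
  exists w w',
    [/\ forall S, linear_subspace S -> S u -> S v -> S w /\ S w',
        forall S, linear_subspace S -> S w -> S w' -> S u /\ S v,
        [/\ ip w w = 1, ip w' w' = 1 & ip w w' = 0],
        ip (E w) w = cR t & ip (E w') w' = cR (al + be - t)].
Proof.
move=> Du Dv uu vv uv Eu Ev albe.
pose gm := ip (E u) v.
have Evu : ip (E v) u = gm^* by rewrite symE // (ipC ipV).
(* The phase z kills the cross terms co si (z^* gm + z gm^* ) of both diagonal entries. *)
have [z [zz zgm]] := unimodular_phase gm.
have [c [s [cs cst]]] := convex_sqrt_weights albe.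
pose co := cR c; pose si := cR s.
have coC : co^* = co := conj_cR c.
have siC : si^* = si := conj_cR s.
have cs1 : co * co + si * si = 1 by rewrite -!cRM -cRD cs.
have cst' : co * co * cR al + si * si * cR be = cR t by rewrite -!cRM -cRD cst.
have sct : si * si * cR al + co * co * cR be = cR (al + be - t).
  by rewrite -!cRM -cRD -cst; congr cR; rewrite -[al + be]mul1r -cs; ring.
have EL a b : E (a *: u + b *: v) = a *: E u + b *: E v := operator_comb2 a b Du Dv.
have [uE vE] := rotation_inverse u v cs1 zz.
exists (co *: u + (si * z) *: v), ((- si) *: u + (co * z) *: v); split.
- by move=> S SS Su Sv; split; apply: subspace_comb2.
- by move=> S SS Sw Sw'; split; [rewrite uE | rewrite vE]; apply: subspace_comb2.
- exact: ip_rotation.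
- rewrite EL ip_comb2 // Eu Ev Evu -/gm !rmorphM /= coC siC.
  transitivity (co * co * cR al + si * si * cR be + co * si * (z^* * gm + z * gm^*)
    + si * si * cR be * (z * z^* - 1)); first ring.
  by rewrite zgm zz subrr !mulr0 !addr0 cst'.
- rewrite EL ip_comb2 // Eu Ev Evu -/gm !rmorphM /= rmorphN /= coC siC.
  transitivity (si * si * cR al + co * co * cR be - co * si * (z^* * gm + z * gm^*)
    + co * co * cR be * (z * z^* - 1)); first ring.
  by rewrite zgm zz subrr !mulr0 subr0 addr0 sct.
Qed.

Lemma has_diagonal_prepend n x f b :
  ip (E x) x = cR (b 0%N) -> has_diagonal n f (fun i => b i.+1) ->
  has_diagonal n.+1 (prepend x f) b.
Proof. by move=> Ex df [|i] ilt //=; apply: df. Qed.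

Lemma orthonormal_on_prepend n v e :
  orthonormal_on ip n.+1 v -> fspan e n = fspan (fun i => v i.+1) n ->
  orthonormal_on ip n e -> orthonormal_on ip n.+1 (prepend (v 0%N) e).
Proof.
move=> onv fe one.
have ev0 i : (i < n)%N -> ip (e i) (v 0%N) = 0.
  move=> ilt; have : fspan (fun i => v i.+1) n (e i) by rewrite -fe; exact: fspan_gen.
  by apply: (fspan_min (orthogonal_subspace ipV (v 0%N))) => k kn; rewrite /= onv.
case=> [|i] [|j] ilt jlt /=; first exact: onv.
- by rewrite (ipC ipV) ev0 ?conjC0.
- exact: ev0.
- exact: one.
Qed.

Lemma fspan_prepend n (v e : nat -> V) :
  fspan e n = fspan (fun i => v i.+1) n -> fspan (prepend (v 0%N) e) n.+1 = fspan v n.+1.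
Proof.
move=> fe; apply: eq_fspan => -[|i] ilt.
- exact: fspan_gen.
- by apply: fspan_shift; rewrite -fe; exact: fspan_gen.
- exact: (fspan_gen (prepend (v 0%N) e) ilt).
- apply: (@fspan_shift _ _ (prepend (v 0%N) e) n (v i.+1)).
  by rewrite /= fe; exact: fspan_gen.
Qed.

Lemma exists_pivot_frame n u (a b : nat -> R) j :
  (forall i, (i < n.+1)%N -> D (u i)) -> orthonormal_on ip n.+1 u ->
  has_diagonal n.+1 u a -> (j <= n)%N -> a 0%N <= b 0%N -> b 0%N <= a j ->
  exists v, [/\ orthonormal_on ip n.+1 v, fspan v n.+1 = fspan u n.+1,
    ip (E (v 0%N)) (v 0%N) = cR (b 0%N) &
    has_diagonal n (fun i => v i.+1) (pivoted a b j)].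
Proof.
move=> Du onu du jn a0b0 b0aj; have [j0|jpos] := posnP j.
  have a0 : a 0%N = b 0%N by apply/le_anti; rewrite a0b0; move: b0aj; rewrite j0.
  exists u; split => //; first by rewrite -a0 du.
  by move=> i ilt; rewrite /pivoted j0 /= addr0 du.
have uj0 : 0%N != j by rewrite eq_sym -lt0n.
have u00 : ip (u 0%N) (u 0%N) = 1 by rewrite onu.
have ujj : ip (u j) (u j) = 1 by rewrite onu ?eqxx.
have u0j : ip (u 0%N) (u j) = 0 by rewrite onu // (negbTE uj0).
have albe : a 0%N <= b 0%N <= a j by rewrite a0b0 b0aj.
have [w [w' [fwd bwd gram Ew Ew']]] :=
  rotate_pair (Du 0%N isT) (Du j jn) u00 ujj u0j (du 0%N isT) (du j jn) albe.
exists (replace2 u 0 j w w'); split.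
- exact: orthonormal_on_replace2.
- exact: fspan_replace2.
- by rewrite /replace2 eqxx.
- move=> i ilt; rewrite /replace2 /pivoted /=; have [ij|ij] := eqVneq i.+1 j.
    by rewrite Ew'; congr cR; rewrite ij; ring.
  by rewrite addr0 du.
Qed.

Theorem finite_schur_horn n : forall (u : nat -> V) (a b : nat -> R),
  (forall i, (i < n)%N -> D (u i)) -> orthonormal_on ip n u -> has_diagonal n u a ->
  nondecreasing_seq b -> prefix_dominated n a b ->
  exists e, [/\ fspan e n = fspan u n, orthonormal_on ip n e & has_diagonal n e b].
Proof.
elim: n => [|n IH] u a b Du onu du ndb dom; first by exists u.
have [j jn [b0aj ajb0]] := prefix_dominated_pivot ndb dom.
have a0b0 : a 0%N <= b 0%N by have := dom.1 1%N isT; rewrite !big_ord1.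
have [v [onv fv Ev0 dv]] := exists_pivot_frame Du onu du jn a0b0 b0aj.
have Dv i : (i < n)%N -> D (v i.+1).
  by move=> ilt; apply: fspan_min opE.1 Du _ _; rewrite -fv; exact: fspan_gen.
have dom' := prefix_dominated_pivoted ndb dom jn b0aj (fun i ij => ltW (ajb0 i ij)).
have [e [fe one de]] := IH (fun i => v i.+1) _ (fun i => b i.+1) Dv
  (fun i k => onv i.+1 k.+1) dv (fun i k ik => ndb i.+1 k.+1 ik) dom'.
exists (prepend (v 0%N) e); split.
- by rewrite fspan_prepend.
- exact: orthonormal_on_prepend.
- exact: has_diagonal_prepend.
Qed.

End Operator.

Lemma dtilde_prefix_dominated (R : realType) (d lam : nat -> R) N :
  (1 <= N)%N -> (forall k, (1 <= k <= N)%N -> delta d lam N <= delta d lam k) ->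
  prefix_dominated N (dtilde d lam N) d.
Proof.
move=> N1 hN.
have sum_dtilde k : (1 <= k <= N)%N ->
    \sum_(i < k) dtilde d lam N i = \sum_(i < k) lam i + delta d lam N.
  case: k => [|k] // /andP[_ kN]; rewrite !big_ord_recl /dtilde /=.
  rewrite (eq_bigr (fun i : 'I_k => lam i.+1)) => [|i _]; first by ring.
  by rewrite /= (leq_trans _ kN) // ltnS ltn_ord.
have sum_d k : \sum_(i < k) d i = \sum_(i < k) lam i + delta d lam k.
  by rewrite /delta sumrB addrC subrK.
split=> [[|k] kN|]; first by rewrite !big_ord0.
  by rewrite sum_dtilde ?kN // sum_d lerD2l hN ?kN.
by rewrite sum_dtilde ?N1 ?leqnn // sum_d.
Qed.

Definition splice {T} (N : nat) (e g : nat -> T) (i : nat) : T :=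
  if (i < N)%N then e i else g i.

Section Splice.
Variables (R : realType) (V : lmodType R[i]) (ip : V -> V -> R[i]).
Hypothesis ipV : inner_product_space ip.
Variables (N : nat) (e g : nat -> V).

Lemma orthonormal_seq_splice :
  orthonormal_on ip N e -> (forall i, (i < N)%N -> fspan g N (e i)) ->
  orthonormal_seq ip g -> orthonormal_seq ip (splice N e g).
Proof.
move=> one eg ong.
have eg_perp i j : (i < N)%N -> (N <= j)%N -> ip (e i) (g j) = 0.
  move=> iN Nj; apply: (fspan_min (orthogonal_subspace ipV (g j))) (eg i iN) => k kN /=.
  by rewrite ong ltn_eqF // (leq_trans kN Nj).
move=> i j; rewrite /splice; case: ltnP => iN; case: ltnP => jN.
- exact: one.
- by rewrite eg_perp // ltn_eqF // (leq_trans iN jN).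
- by rewrite (ipC ipV) eg_perp // conjC0 gtn_eqF // (leq_trans jN iN).
- exact: ong.
Qed.

Lemma lspan_splice : fspan e N = fspan g N -> lspan (splice N e g) = lspan g.
Proof.
move=> feg; apply/seteqP; split; apply: lspan_min; try exact: lspan_subspace.
- move=> i; rewrite /splice; case: ltnP => iN; last exact: lspan_gen.
  by apply: (@fspan_sub_lspan _ _ g N); rewrite -feg; exact: fspan_gen.
- move=> i; case: (ltnP i N) => iN.
    have : fspan e N (g i) by rewrite feg; exact: fspan_gen.
    apply: (fspan_min (lspan_subspace (splice N e g))) => k kN.
    by have := lspan_gen (splice N e g) k; rewrite /splice kN.
  by have := lspan_gen (splice N e g) i; rewrite /splice ltnNge iN.
Qed.

End Splice.

Theorem lemma3p5 (R : realType) (d lam : nat -> R)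
  (V : lmodType R[i]) (ip : V -> V -> R[i]) (D : set V) (E : V -> V)
  (N : nat) (g : nat -> V) :
  nondecreasing_seq d -> nondecreasing_seq lam ->
  (forall k : nat, (1 <= k)%N -> 0 <= delta d lam k) ->
  limn_einf (fun k => (delta d lam k)%:E) = 0%E ->
  hilbert_space ip -> operator_on D E -> dense_in ip D -> symmetric_on ip D E ->
  (1 <= N)%N -> (forall k : nat, (1 <= k <= N)%N -> delta d lam N <= delta d lam k) ->
  orthonormal_seq ip g -> (forall i : nat, D (g i)) ->
  (forall i : nat, ip (E (g i)) (g i) = cR (dtilde d lam N i)) ->
  exists e : nat -> V,
    [/\ orthonormal_seq ip e,
        (forall i : nat, lspan g (e i)),
        clspan ip e = clspan ip g &
        (forall i : nat, ip (E (e i)) (e i) = cR (d i))].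
Proof.
move=> ndd _ _ _ [ipV _] opE _ symE N1 hN ong Dg Eg.
have [e [feg one de]] := finite_schur_horn ipV opE symE (fun i _ => Dg i)
  (fun i j _ _ => ong i j) (fun i _ => Eg i) ndd (dtilde_prefix_dominated N1 hN).
have lspanE := lspan_splice feg.
exists (splice N e g); split.
- by apply: orthonormal_seq_splice => // i iN; rewrite -feg; exact: fspan_gen.
- by move=> i; rewrite -lspanE; exact: lspan_gen.
- by rewrite /clspan lspanE.
- move=> i; rewrite /splice; case: ltnP => iN; first exact: de.
  by rewrite Eg /dtilde ltnNge iN (_ : (i == 0%N) = false) //; lia.
Qed.
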